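(* For all integers $n,i,k\ge 0$, \[ \binom{n}{i}\binom{n+i}{i}\binom{n}{k}\binom{n+k}{k}=\sum_{j\ge0}\binom{i+k}{i}\binom{j}{j-i,\,j-k,\,i+k-j}\binom{n}{j}\binom{n+j}{j}. \]
   Context: $\binom{n}{k}=0$ unless $0\le k\le n$. The multinomial coefficient $\binom{m}{a,b,c}$ equals $\frac{m!}{a!\,b!\,c!}$ if $a,b,c\ge0$ and $a+b+c=m$, and $0$ otherwise. *)

From mathcomp Require Import all_boot all_order all_algebra.
Set Implicit Arguments. Unset Strict Implicit. Unset Printing Implicit Defensive.

Definition multinom3 (m : nat) (a b c : int) : nat :=
  match a, b, c with
  | Posz a', Posz b', Posz c' =>
      if a' + b' + c' == m then m`! %/ (a'`! * b'`! * c'`!) else 0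
  | _, _, _ => 0
  end.

From mathcomp Require Import all_boot all_order all_algebra.
From mathcomp Require Import ring zify.
Import GRing.Theory.
Local Open Scope ring_scope.

(* Write F j := C(n, j) C(n + j, j) (the coefficients of the shifted Legendre
   polynomial of degree n) and A_k j := C(i + k, i) C(j, i) C(i, i + k - j)
   (the multinomial of the statement times C(i + k, i)).  F obeys the
   recurrence (j + 1)^2 F (j + 1) = (n(n + 1) - j(j + 1)) F j, and A obeys the
   adjoint recurrence in k, so summation by parts shows that
   T k := \sum_j A_k j F j satisfies the same recurrence in k as F.  Since
   T 0 = F i, induction on k gives T k = F i * F k. *)

Lemma multinom3_binE (i k j : nat) : (j <= i + k)%N ->
  multinom3 j (j%:Z - i%:Z) (j%:Z - k%:Z) (i%:Z + k%:Z - j%:Z) =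
  ('C(j, i) * 'C(i, i + k - j))%N.
Proof.
move=> le_j_ik.
have [le_ij|lt_ji] := leqP i j; last first.
  have -> : j%:Z - i%:Z = Negz (i - j).-1 by rewrite NegzE; lia.
  by rewrite bin_small.
have [le_kj|lt_jk] := leqP k j; last first.
  have -> : j%:Z - k%:Z = Negz (k - j).-1 by rewrite NegzE; lia.
  rewrite (@bin_small i) ?muln0; last lia.
  by case: (j%:Z - i%:Z).
rewrite !subzn // /multinom3.
have -> : (j - i + (j - k) + (i + k - j) == j)%N by apply/eqP; lia.
have le_kji : (i + k - j <= i)%N by lia.
have fact_ji := bin_fact le_ij; have fact_ik := bin_fact le_kji.
rewrite (_ : i - (i + k - j) = j - k)%N in fact_ik; last lia.
have -> : j`! = ('C(j, i) * 'C(i, i + k - j)) * ((j - i)`! * (j - k)`! * (i + k - j)`!)%N.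
  by rewrite -fact_ji -fact_ik; ring.
by rewrite mulnK // !muln_gt0 !fact_gt0.
Qed.

Definition legendre_coef (n j : nat) : int := ('C(n, j) * 'C(n + j, j))%N%:Z.

Lemma legendre_coefS n j : legendre_coef n j.+1 * (j.+1)%:Z ^+ 2 =
  legendre_coef n j * (n%:Z * (n%:Z + 1) - j%:Z * (j%:Z + 1)).
Proof.
rewrite /legendre_coef.
have [le_jn|lt_nj] := leqP j n; last first.
  by rewrite (@bin_small n j) ?(@bin_small n j.+1) ?mul0n ?mul0r //; lia.
have binS_n := mul_bin_left n j.
have binS_nj := mul_bin_diag (n + j).+1 j; rewrite /= -addnS in binS_nj.
have : (('C(n, j.+1) * 'C(n + j.+1, j.+1)) * (j.+1 * j.+1) =
        ('C(n, j) * 'C(n + j, j)) * ((n - j) * (n + j).+1))%N.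
  by rewrite mulnACA ![(_ * j.+1)%N]mulnC binS_n -binS_nj; ring.
move/(congr1 Posz); rewrite !PoszM expr2 => ->; congr (_ * _).
by rewrite -PoszM -!PoszD -!PoszM subzn; [congr Posz|]; nia.
Qed.

Definition linz_coef (i k j : nat) : int :=
  ('C(i + k, i) * 'C(j, i) * 'C(i, i + k - j))%N%:Z.

Lemma linz_coefS_interior i k j :
  (i <= j.+1)%N -> (k <= j.+1)%N -> (j < i + k)%N ->
  (k.+1)%:Z ^+ 2 * linz_coef i k.+1 j.+1 =
  (j.+1)%:Z ^+ 2 * linz_coef i k j
    + ((j.+1)%:Z * ((j.+1)%:Z + 1) - k%:Z * (k%:Z + 1)) * linz_coef i k j.+1.
Proof.
move=> le_ij le_kj lt_j_ik; rewrite /linz_coef addnS !PoszM.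
set s := (i + k)%N; set c := (s - j.+1)%N.
rewrite (_ : s.+1 - j.+1 = c.+1)%N; last lia.
rewrite (_ : s - j = c.+1)%N; last lia.
have binS_s : (s.+1)%:Z * ('C(s, i))%:Z = (k.+1)%:Z * ('C(s.+1, i))%:Z.
  by rewrite -!PoszM mul_bin_down (_ : s.+1 - i = k.+1)%N //; lia.
have binS_j : (j.+1)%:Z * ('C(j, i))%:Z = (j.+1 - i)%N%:Z * ('C(j.+1, i))%:Z.
  by rewrite -!PoszM mul_bin_down.
have binS_c : (c.+1)%:Z * ('C(i, c.+1))%:Z = (j.+1 - k)%N%:Z * ('C(i, c))%:Z.
  by rewrite -!PoszM mul_bin_left (_ : i - c = j.+1 - k)%N //; lia.
(* Clearing the factor c + 1 lets each binomial ratio identity above be used. *)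
apply: (@mulfI _ (c.+1)%:Z) => //.
set B := ('C(s, i))%:Z; set B' := ('C(s.+1, i))%:Z; set P := ('C(j.+1, i))%:Z.
set P' := ('C(j, i))%:Z; set Q := ('C(i, c))%:Z; set R := ('C(i, c.+1))%:Z.
transitivity ((k.+1)%:Z * ((k.+1)%:Z * B') * P * ((c.+1)%:Z * R)); first by ring.
rewrite -binS_s binS_c.
transitivity ((j.+1)%:Z * B * ((j.+1)%:Z * P') * ((c.+1)%:Z * R) +
  (c.+1)%:Z * ((j.+1)%:Z * ((j.+1)%:Z + 1) - k%:Z * (k%:Z + 1)) * B * P * Q);
  last by ring.
rewrite binS_j binS_c.
have -> : (c.+1)%:Z = i%:Z + k%:Z - j%:Z by lia.
have -> : (s.+1)%:Z = i%:Z + k%:Z + 1 by lia.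
have -> : (j.+1 - i)%N%:Z = j%:Z + 1 - i%:Z by lia.
have -> : (j.+1 - k)%N%:Z = j%:Z + 1 - k%:Z by lia.
ring.
Qed.

Lemma linz_coefS i k j : (j <= i + k)%N ->
  (k.+1)%:Z ^+ 2 * linz_coef i k.+1 j =
  (j%:Z) ^+ 2 * linz_coef i k j.-1
    + (j%:Z * (j%:Z + 1) - k%:Z * (k%:Z + 1)) * linz_coef i k j.
Proof.
move=> le_j_ik.
have [le_ij|lt_ji] := leqP i j; last first.
  rewrite /linz_coef (@bin_small j i) // (@bin_small j.-1 i); last lia.
  by rewrite !muln0 !mul0n !mulr0 addr0.
have [le_kj|lt_jk] := leqP k j; last first.
  by rewrite /linz_coef addnS !(@bin_small i) ?muln0 ?mulr0 ?addr0 //; lia.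
case: j le_j_ik le_ij le_kj => [|j] le_j_ik le_ij le_kj.
  by have [-> ->] : i = 0%N /\ k = 0%N by lia.
by apply: linz_coefS_interior => //; lia.
Qed.

(* At j = i + k + 1 the truncated subtraction makes linz_coef i k j nonzero,
   so this boundary case is not an instance of linz_coefS. *)
Lemma linz_coef_top i k :
  (k.+1)%:Z ^+ 2 * linz_coef i k.+1 (i + k).+1 =
  ((i + k).+1)%:Z ^+ 2 * linz_coef i k (i + k).
Proof.
rewrite /linz_coef addnS !subnn bin0 !muln1 !PoszM.
have binS_s : ((i + k).+1)%:Z * ('C(i + k, i))%:Z = (k.+1)%:Z * ('C((i + k).+1, i))%:Z.
  by rewrite -!PoszM mul_bin_down (_ : (i + k).+1 - i = k.+1)%N //; lia.
by rewrite -!expr2 -!exprMn binS_s.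
Qed.

Definition linz_sum (n i k : nat) : int :=
  \sum_(0 <= j < (i + k).+1) linz_coef i k j * legendre_coef n j.

Lemma linz_sumS n i k : (k.+1)%:Z ^+ 2 * linz_sum n i k.+1 =
  (n%:Z * (n%:Z + 1) - k%:Z * (k%:Z + 1)) * linz_sum n i k.
Proof.
set A := linz_coef i k; set F := legendre_coef n.
set c := fun j : nat => j%:Z * (j%:Z + 1) - k%:Z * (k%:Z + 1).
rewrite /linz_sum addnS mulr_sumr big_nat_recr //= mulrA linz_coef_top.
set s := (i + k)%N.
have expand : \sum_(0 <= j < s.+1) (k.+1)%:Z ^+ 2 * (linz_coef i k.+1 j * F j) =
    \sum_(0 <= j < s.+1) (j%:Z) ^+ 2 * A j.-1 * F j + \sum_(0 <= j < s.+1) c j * A j * F j.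
  rewrite -big_split; apply: eq_big_nat => j /andP[_ lt_js].
  by rewrite mulrA linz_coefS ?mulrDl //; lia.
have shift : \sum_(0 <= j < s.+1) (j%:Z) ^+ 2 * A j.-1 * F j + (s.+1)%:Z ^+ 2 * A s * F s.+1 =
    \sum_(0 <= j < s.+1) A j * (F j.+1 * (j.+1)%:Z ^+ 2).
  rewrite -(big_nat_recr _ _ (fun j : nat => (j%:Z) ^+ 2 * A j.-1 * F j)) //.
  rewrite big_nat_recl // expr0n /= !mul0r add0r.
  by apply: eq_bigr => j _; ring.
rewrite expand addrAC shift mulr_sumr -big_split /=.
by apply: eq_bigr => j _; rewrite legendre_coefS /c; ring.
Qed.

Lemma linz_sum0 n i : linz_sum n i 0 = legendre_coef n i.
Proof.
rewrite /linz_sum addn0 big_nat_recr //= big1_seq ?add0r.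
  by rewrite /linz_coef addn0 subnn !bin0 binn !mul1n mul1r.
move=> j; rewrite mem_iota => /andP[_ lt_ji].
by rewrite /linz_coef (@bin_small j i) ?muln0 ?mul0r //; lia.
Qed.

Lemma legendre_coefM n i k : legendre_coef n i * legendre_coef n k = linz_sum n i k.
Proof.
elim: k => [|k IHk]; first by rewrite linz_sum0 /legendre_coef bin0 addn0 bin0 mulr1.
apply: (@mulfI _ ((k.+1)%:Z ^+ 2)); first by rewrite expf_neq0.
by rewrite linz_sumS -IHk mulrCA (mulrC _ (legendre_coef n k.+1)) legendre_coefS; ring.
Qed.

Theorem mainTheorem3 (n i k : nat) :
  ('C(n, i) * 'C(n + i, i) * 'C(n, k) * 'C(n + k, k))%N =
  (\sum_(0 <= j < (i + k).+1)
     'C(i + k, i) * multinom3 j (j%:Z - i%:Z) (j%:Z - k%:Z) (i%:Z + k%:Z - j%:Z)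
       * 'C(n, j) * 'C(n + j, j))%N.
Proof.
apply/eqP; rewrite -eqz_nat; apply/eqP.
rewrite -mulnA PoszM -[LHS]/(legendre_coef n i * legendre_coef n k).
rewrite legendre_coefM /linz_sum.
rewrite (big_morph Posz PoszD (erefl 0%Z)); apply: eq_big_nat => j /andP[_ lt_j].
by rewrite multinom3_binE /linz_coef -?PoszM ?mulnA //; lia.
Qed.
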